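(* Let $G=(V,E)$ be a connected undirected graph with positive edge weights $w$, and run the distributed algorithm described in the context synchronously at every node. Then for every node $v\in V$ and every node $s\in V\setminus\{v\}$, at any time after the first $2\,\mathcal{D}(G)+1$ phases have been completed, the variable $B[v,s]$ at $v$ equals $\mathsf{bc}_v(s)$.
   Context: Graph notions. $G=(V,E)$ is connected, undirected, with weights $w(e)>0$; $N(v)$ is the set of neighbors of $v$ and $N[v]=N(v)\cup\{v\}$. The length of a path is the sum of its edge weights; $\mathrm{dist}(s,t)$ is the length of a shortest $s$–$t$ path. For $s\neq t$, $\mathrm{maxhop}(s,t)$ is the maximum number of edges of a shortest (minimum-length) $s$–$t$ path, $\mathrm{maxhop}(s,s)=0$, and $\mathcal{D}(G)=\max_{s,t\in V}\mathrm{maxhop}(s,t)$. $\sigma_{s,t}$ is the number of shortest $s$–$t$ paths ($\sigma_{s,s}=1$) and $\sigma_{s,t}(v)$ the number of those passing through $v$ ($\sigma_{s,s}(s)=1$). For $s\in V$, $\mathsf{bc}_v(s)=\sum_{t\neq v}\sigma_{s,t}(v)/\sigma_{s,t}$. Algorithm (at each node $v$). Initialization: for all $t\in V$: $D[t]=+\infty$, $\mathrm{NH}[t]=\mathrm{PH}[t]=\emptyset$, and for all $u\in N[v]$: $B[u,t]=0$, $S[u,t]=0$; then $S[v,v]=1$, $D[v]=0$. Execution proceeds in synchronous phases; in each phase every node $v$ sends, for every $t\in V$, the message $(t,D[t],S[v,t],B[v,t])$ to every neighbor, receives all messages sent to it by its neighbors in that phase, and processes each of them (in arbitrary order) as follows.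 On receipt of $(t,d,s,b)$ from $u\in N(v)$: remove $u$ from $\mathrm{NH}[t]$ and from $\mathrm{PH}[t]$; if $d+w(\{u,v\})<D[t]$ set $D[t]\leftarrow d+w(\{u,v\})$; else if $d+w(\{u,v\})=D[t]$ add $u$ to $\mathrm{NH}[t]$; else if $d-w(\{u,v\})=D[t]$ add $u$ to $\mathrm{PH}[t]$. Then set $S[u,t]\leftarrow s$, $B[u,t]\leftarrow b$; if $t\neq v$ set $S[v,t]\leftarrow\sum_{x\in\mathrm{NH}[t]}S[x,t]$; set $B[v,t]\leftarrow S[v,t]\cdot\sum_{x\in\mathrm{PH}[t]}\frac{B[x,t]+1}{S[x,t]}$ (a term with $S[x,t]=0$ is taken as $0$); finally set $C\leftarrow\sum_{x\neq v}B[v,x]$. *)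

From HB Require Import structures.
From mathcomp Require Import all_boot all_order all_algebra.
From mathcomp Require Export constructive_ereal.
Set Implicit Arguments. Unset Strict Implicit. Unset Printing Implicit Defensive.
Import Order.TTheory GRing.Theory Num.Theory.
Local Open Scope ring_scope.

Section Graph.
Variables (V : finType) (R : realFieldType).
(* the graph: a symmetric irreflexive adjacency relation (hypotheses in the
   theorem), with edge weights w u v *)
Variable adj : rel V.
Variable w : V -> V -> R.

Fixpoint seqs_upto (n : nat) : seq (seq V) :=
  if n is n'.+1 then [::] :: [seq x :: p | x <- enum V, p <- seqs_upto n']
  else [:: [::]].

(* A path from s is represented by s :: p; [spaths s t] lists all simple
   s-t paths (every shortest path is simple since weights are positive). *)
Definition spaths (s t : V) : seq (seq V) :=
  [seq p <- undup (seqs_upto #|V|) |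
     [&& path adj s p, uniq (s :: p) & last s p == t]].

Definition plen (s : V) (p : seq V) : R :=
  \sum_(e <- zip (s :: p) p) w e.1 e.2.

Definition shortest_paths (s t : V) : seq (seq V) :=
  [seq p <- spaths s t | all (fun q => plen s p <= plen s q) (spaths s t)].

(* sigma_{s,t}: number of shortest s-t paths (sigma_{s,s} = 1) *)
Definition sigma (s t : V) : nat := size (shortest_paths s t).

Definition sigma_through (s t v : V) : nat :=
  count (fun p => v \in s :: p) (shortest_paths s t).

Definition maxhop (s t : V) : nat := \max_(p <- shortest_paths s t) size p.

Definition hopdiam : nat := \max_(s : V) \max_(t : V) maxhop s t.

Definition bc (v s : V) : R :=
  \sum_(t : V | t != v) (sigma_through s t v)%:R / (sigma s t)%:R.

(* local state of a node v; D[t] is an extended real (+oo allowed);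
   S u t = S[u,t], B u t = B[u,t] (only entries u in N[v] are ever used). *)
Record lstate := LState {
  Dv : V -> \bar R;
  NH : V -> {set V};
  PH : V -> {set V};
  Sv : V -> V -> R;
  Bv : V -> V -> R;
  Cv : R }.

Definition init_state (v : V) : lstate :=
  LState (fun t => if t == v then 0%E else +oo%E)
         (fun _ => set0) (fun _ => set0)
         (fun u t => if (u == v) && (t == v) then 1 else 0)
         (fun _ _ => 0) 0.

Definition upd {A : Type} (f : V -> A) (x : V) (a : A) : V -> A :=
  fun y => if y == x then a else f y.

(* (B[x,t] + 1) / S[x,t], taken as 0 when S[x,t] = 0 *)
Definition ratio (b s : R) : R := if s == 0 then 0 else (b + 1) / s.

Definition process (v : V) (st : lstate) (u t : V) (d : \bar R) (s b : R)
  : lstate :=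
  let wuv := (w u v)%:E in
  let NH0 := NH st t :\ u in
  let PH0 := PH st t :\ u in
  let Dt := Dv st t in
  let '(Dt', NH1, PH1) :=
     if (d + wuv < Dt)%E then ((d + wuv)%E, NH0, PH0)
     else if (d + wuv)%E == Dt then (Dt, u |: NH0, PH0)
     else if (d - wuv)%E == Dt then (Dt, NH0, u |: PH0)
     else (Dt, NH0, PH0) in
  let S1 := fun x y => if (x == u) && (y == t) then s else Sv st x y in
  let B1 := fun x y => if (x == u) && (y == t) then b else Bv st x y in
  let Svt := if t != v then \sum_(x in NH1) S1 x t else S1 v t in
  let S2 := fun x y => if (x == v) && (y == t) then Svt else S1 x y in
  let Bvt := Svt * \sum_(x in PH1) ratio (B1 x t) (S1 x t) in
  let B2 := fun x y => if (x == v) && (y == t) then Bvt else B1 x y in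
  LState (upd (Dv st) t Dt') (upd (NH st) t NH1) (upd (PH st) t PH1)
         S2 B2 (\sum_(x | x != v) B2 v x).

Definition config := V -> lstate.

(* the messages v receives in one phase: for every neighbor u and every t,
   the message (t, D_u[t], S_u[u,t], B_u[u,t]) sent by u *)
Definition msgs (v : V) : seq (V * V) :=
  [seq (u, t) | u <- [seq u <- enum V | adj v u], t <- enum V].

(* delivery to v of the message about t from u, where c is the configuration
   at the start of the phase (when all messages were sent) *)
Definition deliver (c : config) (v : V) (st : lstate) (ut : V * V) : lstate :=
  process v st ut.1 ut.2 (Dv (c ut.1) ut.2) (Sv (c ut.1) ut.1 ut.2)
          (Bv (c ut.1) ut.1 ut.2).

(* one synchronous phase; [order v] is the (arbitrary) order in which v
   processes its received messages *)
Definition phase (order : V -> seq (V * V)) (c : config) : config :=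
  fun v => foldl (deliver c v) (c v) (order v).

Fixpoint run (sched : nat -> V -> seq (V * V)) (k : nat) : config :=
  if k is k'.+1 then phase (sched k') (run sched k') else init_state.

(* state of v after k completed phases and after processing the first j
   messages (in its processing order) of phase k+1: this covers every
   point in time *)
Definition state_at (sched : nat -> V -> seq (V * V)) (k j : nat) (v : V)
  : lstate :=
  foldl (deliver (run sched k) v) (run sched k v) (take j (sched k v)).

End Graph.

(* As the weights are positive, the tight edges x -> y, those with
   dist x + w x y = dist y, form an acyclic graph whose paths from s are exactly the
   shortest paths. Hence sigma_t is the sum of sigma_u over the tight predecessors u of
   t, and Brandes' recursion bc_v(s) = sigma_v * sum_x (bc_x(s) + 1) / sigma_x, over
   the tight successors x of v, holds. The algorithm evaluates these recursions in
   Bellman-Ford fashion: D[s] never drops below dist and is exact after D(G) phases;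
   from then on NH[s] and PH[s] are the tight predecessors and successors, so S[v,s]
   becomes exact one phase after those of the tight predecessors of v, and B[v,s] one
   phase after those of its tight successors, i.e. after at most D(G) + 1 + (D(G) - 1)
   phases. Beyond that every message carries exact values, so no delivery disturbs an
   exact state, which also covers the moments inside a phase. *)

From Pilot Require Import Defs.
From HB Require Import structures.
From mathcomp Require Import all_boot all_order all_algebra.
From mathcomp Require Import constructive_ereal.
From mathcomp Require Import lra zify.
Import Order.TTheory GRing.Theory Num.Theory.
Set Implicit Arguments. Unset Strict Implicit. Unset Printing Implicit Defensive.
Local Open Scope ring_scope.

Lemma exists_argmin_seq (A : eqType) d (T : orderType d) (f : A -> T) (l : seq A) :
  l != [::] -> exists2 a, a \in l & forall b, b \in l -> (f a <= f b)%O.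
Proof.
elim: l => [//|x [|y l] IH] _.
  by exists x => [|b]; rewrite ?mem_seq1 // => /eqP ->.
have [a al min_a] := IH isT.
have [fxa|fax] := leP (f x) (f a).
  exists x; first exact: mem_head.
  by move=> b; rewrite inE => /predU1P[-> //|/min_a]; apply: le_trans.
exists a; first by rewrite inE al orbT.
by move=> b; rewrite inE => /predU1P[->|/min_a //]; apply: ltW.
Qed.

Lemma foldl_ind (A : Type) (B : eqType) (P : A -> Prop) (f : A -> B -> A)
    (l : seq B) (a : A) :
  P a -> (forall a' b, b \in l -> P a' -> P (f a' b)) -> P (foldl f a l).
Proof.
elim: l a => [|b l IH] a //= Pa Pf; apply: IH => [|a' b' b'l]; apply: Pf => //.
- exact: mem_head.
- by rewrite inE b'l orbT.
Qed.

Lemma sum_delta (I : finType) (R : pzSemiRingType) (P : pred I) (F : I -> R) i :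
  \sum_(j | P j) (j == i)%:R * F j = (P i)%:R * F i.
Proof.
rewrite big_mkcond (bigD1 i) //= big1 => [|j /negbTE ji]; last first.
  by rewrite ji mul0r if_same.
by rewrite eqxx mul1r addr0; case: (P i); rewrite ?mul1r ?mul0r.
Qed.

(** * Delivery of a single message *)

Section Delivery.
Variables (V : finType) (R : realFieldType) (w : V -> V -> R) (s : V).

(* The update of (D[s], NH[s], PH[s]) made by [process] on a message (s, d, _, _)
   from u to v, where dw = d + w u v and dmw = d - w u v. *)
Definition relax (D0 : \bar R) (N0 P0 : {set V}) (u : V) (dw dmw : \bar R) :=
  if (dw < D0)%E then (dw, N0 :\ u, P0 :\ u)
  else if dw == D0 then (D0, u |: (N0 :\ u), P0 :\ u)
  else if dmw == D0 then (D0, N0 :\ u, u |: (P0 :\ u))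
  else (D0, N0 :\ u, P0 :\ u).

Lemma relax_D_le D0 N0 P0 u dw dmw :
  let D' := (relax D0 N0 P0 u dw dmw).1.1 in (D' <= D0)%E /\ (D' <= dw)%E.
Proof.
rewrite /relax; case: ltP => [/ltW//|dw_ge] /=.
by case: ifP => _ /=; [|case: ifP => _ /=].
Qed.

Lemma relax_D_ge D0 N0 P0 u dw dmw (L : \bar R) :
  (L <= D0)%E -> (L <= dw)%E -> (L <= (relax D0 N0 P0 u dw dmw).1.1)%E.
Proof. by rewrite /relax; case: ifP => _ //=; case: ifP => _ //=; case: ifP. Qed.

Lemma relax_subset D0 N0 P0 u dw dmw : let r := relax D0 N0 P0 u dw dmw in
  r.1.2 \subset u |: N0 /\ r.2 \subset u |: P0.
Proof.
rewrite /relax; split; apply/subsetP => x;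
  by repeat case: ifP => _ /=; rewrite !inE; case: (x == u).
Qed.

Lemma relax_settled D0 N0 P0 u dw dmw : (D0 <= dw)%E ->
  let r := relax D0 N0 P0 u dw dmw in
  [/\ r.1.1 = D0,
      forall x, (x \in r.1.2) = (if x == u then dw == D0 else x \in N0) &
      forall x, (x \in r.2) = (if x == u then (dw != D0) && (dmw == D0) else x \in P0)].
Proof.
rewrite /relax leNgt => /negbTE -> /=.
by case: eqP => _; [|case: eqP => _]; split=> // x; rewrite !inE; case: eqP.
Qed.

Lemma deliver_off_s c v st m : m.2 != s -> let st' := deliver w c v st m in
  [/\ Dv st' s = Dv st s, NH st' s = NH st s, PH st' s = PH st s,
      Sv st' ^~ s =1 Sv st ^~ s & Bv st' ^~ s =1 Bv st ^~ s].
Proof.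
case: m => u t /=; rewrite eq_sym => /negbTE st_neq; rewrite /deliver /process /=.
case: (if _ then _ else _) => [[D1 N1] P1] /=.
by rewrite /upd st_neq; split => // x; rewrite !andbF.
Qed.

Lemma deliver_at_s c v st u : u != v -> let st' := deliver w c v st (u, s) in
  let r := relax (Dv st s) (NH st s) (PH st s) u
                 (Dv (c u) s + (w u v)%:E) (Dv (c u) s - (w u v)%:E) in
  [/\ [/\ Dv st' s = r.1.1, NH st' s = r.1.2 & PH st' s = r.2],
      Sv st' u s = Sv (c u) u s /\ Bv st' u s = Bv (c u) u s,
      (forall x, x != u -> x != v -> Sv st' x s = Sv st x s /\ Bv st' x s = Bv st x s) &
      v \notin NH st' s -> v \notin PH st' s ->
      Sv st' v s = (if s != v then \sum_(x in NH st' s) Sv st' x s else Sv st v s) /\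
      Bv st' v s = Sv st' v s * \sum_(x in PH st' s) Defs.ratio (Bv st' x s) (Sv st' x s)].
Proof.
move=> uv; rewrite /deliver /process /relax /=.
case: (if _ then _ else _) => [[D1 N1] P1] /=; rewrite /upd !eqxx /=.
split=> [||x /negbTE xu /negbTE xv|vN vP]; rewrite ?andbT ?(negbTE uv) ?xu ?xv //.
have off_v (X : {set V}) x : v \notin X -> x \in X -> (x == v) = false.
  by move=> vX xX; apply: contraNF vX => /eqP <-.
rewrite [v == u]eq_sym (negbTE uv); split; last congr (_ * _).
  by case: ifP => // _; apply: eq_bigr => x /(off_v _ _ vN) ->.
by apply: eq_bigr => x /(off_v _ _ vP) ->.
Qed.

(* How [process] decides whether the sender x enters NH[s] or PH[s] when D[s] = D0
   does not change. *)
Definition nh_cond c v (D0 : \bar R) x := (Dv (c x) s + (w x v)%:E == D0)%E.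
Definition ph_cond c v (D0 : \bar R) x :=
  ~~ nh_cond c v D0 x && (Dv (c x) s - (w x v)%:E == D0)%E.

Lemma deliver_settled c v st u : u != v ->
  (Dv st s <= Dv (c u) s + (w u v)%:E)%E -> let st' := deliver w c v st (u, s) in
  [/\ Dv st' s = Dv st s,
      forall x, (x \in NH st' s) =
        (if x == u then nh_cond c v (Dv st s) u else x \in NH st s) &
      forall x, (x \in PH st' s) =
        (if x == u then ph_cond c v (Dv st s) u else x \in PH st s)].
Proof.
move=> uv D_le /=; have [[-> -> ->] _ _ _] := deliver_at_s c st uv.
by have [-> N' P'] := relax_settled (NH st s) (PH st s) u (Dv (c u) s - (w u v)%:E) D_le.
Qed.

Lemma deliver_stored c v st m u : m.1 != v -> u != v ->
  let st' := deliver w c v st m in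
  (Sv st' u s, Bv st' u s) =
  if m == (u, s) then (Sv (c u) u s, Bv (c u) u s) else (Sv st u s, Bv st u s).
Proof.
case: m => u' t /= u'v uv; have [->|ts] := eqVneq t s; last first.
  have [_ _ _ -> ->] := deliver_off_s c v st (m := (u', t)) ts.
  by rewrite xpair_eqE (negbTE ts) andbF.
have [_ [Su Bu] others _] := deliver_at_s c st u'v.
rewrite xpair_eqE eqxx andbT; have [->|uu'] := eqVneq u u'; first by rewrite Su Bu.
by have [-> ->] := others u uu' uv.
Qed.

Lemma foldl_deliver_stored c v st l u : uniq l -> (forall m, m \in l -> m.1 != v) ->
  u != v -> let st' := foldl (deliver w c v) st l in
  (Sv st' u s, Bv st' u s) =
  if (u, s) \in l then (Sv (c u) u s, Bv (c u) u s) else (Sv st u s, Bv st u s).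
Proof.
elim: l st => [//|m l IH] st /= /andP[m_l l_uniq] senders uv.
rewrite IH // => [|m' m'l]; last by apply: senders; rewrite inE m'l orbT.
rewrite deliver_stored ?senders ?mem_head // inE eq_sym.
by have [<-|] := eqVneq m; rewrite ?(negbTE m_l) ?if_same.
Qed.

Lemma deliver_D_le c v st m : m.1 != v ->
  (Dv (deliver w c v st m) s <= Dv st s)%E /\
  (m.2 = s -> (Dv (deliver w c v st m) s <= Dv (c m.1) s + (w m.1 v)%:E)%E).
Proof.
case: m => u t /= uv; have [->|ts] := eqVneq t s; last first.
  have [-> _ _ _ _] := deliver_off_s c v st (m := (u, t)) ts.
  by split=> [|/eqP]; rewrite ?lexx ?(negbTE ts).
have [[-> _ _] _ _ _] := deliver_at_s c st uv.
by have [] := relax_D_le (Dv st s) (NH st s) (PH st s) u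
  (Dv (c u) s + (w u v)%:E) (Dv (c u) s - (w u v)%:E).
Qed.

Lemma foldl_deliver_D_le c v st l : (forall m, m \in l -> m.1 != v) ->
  let st' := foldl (deliver w c v) st l in
  (Dv st' s <= Dv st s)%E /\
  (forall u, (u, s) \in l -> (Dv st' s <= Dv (c u) s + (w u v)%:E)%E).
Proof.
elim: l st => [|m l IH] st senders /=; first by rewrite lexx.
have [|le_l le_msg] := IH (deliver w c v st m).
  by move=> m' m'l; apply: senders; rewrite inE m'l orbT.
have [le_m le_ms] := deliver_D_le c st (senders m (mem_head m l)).
split=> [|u]; first exact: le_trans le_l le_m.
rewrite inE => /predU1P[um|]; last exact: le_msg.
by subst m; apply: le_trans le_l (le_ms erefl).
Qed.

Lemma foldl_deliver_settled c v st l : uniq l -> (forall m, m \in l -> m.1 != v) ->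
  (forall u, (u, s) \in l -> (Dv st s <= Dv (c u) s + (w u v)%:E)%E) ->
  let st' := foldl (deliver w c v) st l in
  [/\ Dv st' s = Dv st s,
      forall x, (x \in NH st' s) =
        (if (x, s) \in l then nh_cond c v (Dv st s) x else x \in NH st s) &
      forall x, (x \in PH st' s) =
        (if (x, s) \in l then ph_cond c v (Dv st s) x else x \in PH st s)].
Proof.
elim: l st => [//|[u t] l IH] st /= /andP[m_l l_uniq] senders D_le.
have uv : u != v by apply: (senders (u, t)); rewrite mem_head.
have senders_l m : m \in l -> m.1 != v by move=> ml; apply: senders; rewrite inE ml orbT.
have D_le_l x : (x, s) \in l -> (Dv st s <= Dv (c x) s + (w x v)%:E)%E.
  by move=> xl; apply: D_le; rewrite inE xl orbT.
have [ts_eq|ts] := eqVneq t s.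
  subst t.
  have [D1 N1 P1] := deliver_settled uv (D_le u (mem_head _ _)).
  have [|D' N' P'] := IH (deliver w c v st (u, s)) l_uniq senders_l.
    by rewrite D1; apply: D_le_l.
  split=> [|x|x]; rewrite ?D' ?N' ?P' D1 ?N1 ?P1 // inE xpair_eqE eqxx andbT;
  by have [->|/negbTE xu] := eqVneq x u; rewrite ?eqxx ?xu ?(negbTE m_l).
have [D1 N1 P1] := deliver_off_s c v st (m := (u, t)) ts.
have [|D' N' P'] := IH (deliver w c v st (u, t)) l_uniq senders_l.
  by rewrite D1; apply: D_le_l.
split=> [|x|x]; rewrite ?D' ?N' ?P' D1 ?N1 ?P1 //.
all: by rewrite inE xpair_eqE [s == t]eq_sym (negbTE ts) andbF.
Qed.
End Delivery.

(** * Shortest paths and Brandes' recursion *)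

Section Betweenness.
Variables (V : finType) (R : realFieldType) (adj : rel V) (w : V -> V -> R).
Hypothesis adj_sym : symmetric adj.
Hypothesis adj_irr : irreflexive adj.
Hypothesis connected : forall s t : V, connect adj s t.
Hypothesis w_sym : forall u v : V, adj u v -> w u v = w v u.
Hypothesis w_pos : forall u v : V, adj u v -> 0 < w u v.

Lemma plen_cons a x p : plen w a (x :: p) = w a x + plen w x p.
Proof. by rewrite /plen /= big_cons. Qed.

Lemma plen_cat a p q : plen w a (p ++ q) = plen w a p + plen w (last a p) q.
Proof.
elim: p a => [|x p IH] a /=; first by rewrite /plen big_nil add0r.
by rewrite !plen_cons IH addrA.
Qed.

Lemma plen_ge0 a p : path adj a p -> 0 <= plen w a p.
Proof.
elim: p a => [|x p IH] a /=; first by rewrite /plen big_nil.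
by case/andP=> ax px; rewrite plen_cons addr_ge0 ?IH ?ltW ?w_pos.
Qed.

Lemma mem_seqs_upto n p : (size p <= n)%N -> p \in seqs_upto V n.
Proof.
elim: n p => [|n IH] [|x p] //= size_p; rewrite inE; apply/orP; right.
by apply/allpairsPdep; exists x, p; rewrite mem_enum IH.
Qed.

Lemma mem_spaths s t p :
  (p \in spaths adj s t) = [&& path adj s p, uniq (s :: p) & last s p == t].
Proof.
rewrite /spaths mem_filter mem_undup andb_idr // => /and3P[_ sp_uniq _].
apply/mem_seqs_upto/ltnW; rewrite -[(size p).+1]/(size (s :: p)).
by rewrite -(card_uniqP sp_uniq) max_card.
Qed.

Lemma spaths_exists s t : exists p, p \in spaths adj s t.
Proof.
have /connectP[p st_p ->] := connected s t.
have [q st_q q_uniq _] := shortenP st_p.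
by exists q; rewrite mem_spaths st_q q_uniq eqxx.
Qed.

Variable s : V.

Local Notation SP := (shortest_paths adj w s).
Local Notation sig := (sigma adj w s).
Local Notation thr := (sigma_through adj w s).

Lemma mem_shortest_paths_min t p : (p \in SP t) =
  (p \in spaths adj s t) && all (fun q => plen w s p <= plen w s q) (spaths adj s t).
Proof. by rewrite /shortest_paths mem_filter andbC. Qed.

Lemma shortest_paths_exists t : exists p, p \in SP t.
Proof.
have [p0 p0P] := spaths_exists s t.
have [|p pP p_min] := @exists_argmin_seq _ _ _ (plen w s) (spaths adj s t).
  by apply: contraTneq p0P => ->.
by exists p; rewrite mem_shortest_paths_min pP; apply/allP.
Qed.

Definition dist t := plen w s (head [::] (SP t)).

Lemma head_shortest_paths t : head [::] (SP t) \in SP t.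
Proof. by have [p] := shortest_paths_exists t; case: (SP t) => //= *; apply: mem_head. Qed.

Lemma dist_le_plen t q : q \in spaths adj s t -> dist t <= plen w s q.
Proof.
have := head_shortest_paths t; rewrite mem_shortest_paths_min => /andP[_ /allP].
exact.
Qed.

Lemma mem_shortest_paths_dist t p :
  (p \in SP t) = (p \in spaths adj s t) && (plen w s p == dist t).
Proof.
apply/idP/andP => [pP|[pP /eqP p_len]]; last first.
  by rewrite mem_shortest_paths_min pP p_len; apply/allP => q; apply: dist_le_plen.
move: (pP) (head_shortest_paths t); rewrite !mem_shortest_paths_min.
case/andP=> p_sp /allP p_min /andP[h_sp _].
by rewrite p_sp eq_le p_min // dist_le_plen.
Qed.

Lemma dist_ge0 t : 0 <= dist t.
Proof.
have := head_shortest_paths t; rewrite mem_shortest_paths_dist mem_spaths.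
by case/andP=> /and3P[+ _ _] /eqP <-; apply: plen_ge0.
Qed.

Lemma dist_source : dist s = 0.
Proof.
apply/eqP; rewrite eq_le dist_ge0 andbT.
have -> : 0 = plen w s [::] by rewrite /plen big_nil.
by rewrite dist_le_plen // mem_spaths /= eqxx.
Qed.

Lemma dist_triangle x y : adj x y -> dist y <= dist x + w x y.
Proof.
move=> xy; have := head_shortest_paths x; set p := head _ _.
rewrite mem_shortest_paths_dist mem_spaths => /andP[/and3P[sp p_uniq /eqP px] /eqP <-].
have w_ge0 := ltW (w_pos xy).
have [y_in|y_out] := boolP (y \in s :: p).
  case/splitPl: y_in sp p_uniq px => p1 p2 p1y.
  rewrite cat_path -cat_cons cat_uniq plen_cat.
  move=> /andP[sp1 sp2] /and3P[p1_uniq _ _] _.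
  have : dist y <= plen w s p1 by rewrite dist_le_plen // mem_spaths sp1 p1_uniq p1y eqxx.
  by have := plen_ge0 sp2; lra.
have : dist y <= plen w s (rcons p y).
  apply: dist_le_plen; rewrite mem_spaths rcons_path sp px xy last_rcons eqxx.
  by rewrite -rcons_cons rcons_uniq y_out p_uniq.
by rewrite -cats1 plen_cat px plen_cons /plen big_nil addr0.
Qed.

Definition tight : rel V := fun x y => adj x y && (dist x + w x y == dist y).

Lemma dist_triangle_leif x y : adj x y -> dist y <= dist x + w x y ?= iff tight x y.
Proof. by move=> xy; split; rewrite ?dist_triangle // /tight xy eq_sym. Qed.

Lemma dist_path_leif a p : path adj a p ->
  dist (last a p) <= dist a + plen w a p ?= iff path tight a p.
Proof.
elim: p a => [|x p IH] a /=; first by rewrite /plen big_nil addr0 => _; apply/leif_refl.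
case/andP=> ax /IH IHp; rewrite plen_cons addrA andbC.
apply: leif_trans IHp _.
by rewrite -leifBLR addrK; apply: dist_triangle_leif.
Qed.

Lemma tight_adj x y : tight x y -> adj x y.
Proof. by case/andP. Qed.

Lemma tight_dist_lt x y : tight x y -> dist x < dist y.
Proof. by case/andP=> xy /eqP <-; rewrite ltrDl w_pos. Qed.

Lemma tight_neq_source x y : tight x y -> y != s.
Proof.
move/tight_dist_lt; apply: contraTneq => ->.
by rewrite dist_source -leNgt dist_ge0.
Qed.

Lemma tight_path_dist_sorted a p : path tight a p -> sorted <%R (map dist (a :: p)).
Proof. by move=> ap; rewrite /= path_map; apply: sub_path ap => x y /tight_dist_lt. Qed.

Lemma tight_path_uniq a p : path tight a p -> uniq (a :: p).
Proof.
move/tight_path_dist_sorted/(sorted_uniq lt_trans ltxx).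
exact: map_uniq.
Qed.

Lemma tight_path_dist_le a p x : path tight a p -> x \in a :: p ->
  dist x <= dist (last a p).
Proof.
elim: p a x => [|y p IH] a x /=; first by rewrite mem_seq1 => _ /eqP ->.
case/andP=> /tight_dist_lt ay yp; rewrite inE => /predU1P[->|]; last exact: IH.
exact: ltW (lt_le_trans ay (IH _ _ yp (mem_head _ _))).
Qed.

Lemma mem_shortest_paths t p : (p \in SP t) = path tight s p && (last s p == t).
Proof.
rewrite mem_shortest_paths_dist mem_spaths.
apply/idP/andP => [/andP[/and3P[sp _ /eqP <-] /eqP p_len]|[sp /eqP <-]].
  have [_] := dist_path_leif sp; rewrite dist_source add0r p_len eqxx.
  by move<-.
have sp_adj := sub_path tight_adj sp.
have [_] := dist_path_leif sp_adj; rewrite dist_source add0r sp eq_sym => ->.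
by rewrite sp_adj tight_path_uniq ?eqxx.
Qed.

Lemma rcons_shortest_path u z p : tight u z -> p \in SP u -> rcons p z \in SP z.
Proof.
move=> uz; rewrite !mem_shortest_paths rcons_path last_rcons eqxx andbT.
by case/andP=> -> /eqP ->.
Qed.

Lemma uniq_shortest_paths t : uniq (SP t).
Proof. by rewrite !filter_uniq // undup_uniq. Qed.

Lemma shortest_paths_source : SP s = [:: [::]].
Proof.
apply/perm_small_eq/uniq_perm; rewrite ?uniq_shortest_paths // => p.
rewrite mem_shortest_paths mem_seq1; case/lastP: p => [|p x]; first by rewrite eqxx.
rewrite rcons_path last_rcons; case: (rcons p x =P [::]) => [/eqP|_]; first by case: p.
by apply/negbTE/negP => /andP[/andP[_ /tight_neq_source/negbTE ->]].
Qed.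

Lemma shortest_paths_rcons t : t != s ->
  perm_eq (SP t) [seq rcons p t | u <- [seq u <- enum V | tight u t], p <- SP u].
Proof.
move=> ts; apply: uniq_perm; first exact: uniq_shortest_paths.
  apply: allpairs_uniq_dep => [|u _|]; first by rewrite filter_uniq // enum_uniq.
    exact: uniq_shortest_paths.
  move=> _ _ /allpairsPdep[u1 [p1 [_ p1P ->]]] /allpairsPdep[u2 [p2 [_ p2P ->]]].
  move=> /rcons_inj[p12]; suff u12 : u1 = u2 by rewrite u12 p12.
  by move: p1P p2P; rewrite !mem_shortest_paths p12 => /andP[_ /eqP<-] /andP[_ /eqP<-].
move=> q; rewrite mem_shortest_paths; apply/idP/allpairsPdep.
  case/lastP: q => [/andP[_ /eqP st]|p x]; first by rewrite -st eqxx in ts.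
  rewrite rcons_path last_rcons => /andP[/andP[sp px] /eqP xt]; subst x.
  exists (last s p), p; rewrite mem_filter px mem_enum.
  by rewrite mem_shortest_paths sp eqxx.
case=> u [p [+ + ->]]; rewrite mem_filter mem_shortest_paths.
by case/andP=> ut _ /andP[sp /eqP pu]; rewrite rcons_path last_rcons sp pu ut eqxx.
Qed.

Lemma count_shortest_paths_rec (P : pred (seq V)) t : t != s ->
  count P (SP t) = (\sum_(u | tight u t) count (fun p => P (rcons p t)) (SP u))%N.
Proof.
move=> ts; rewrite (permP (shortest_paths_rcons ts)) count_flatten sumnE !big_map.
by rewrite big_filter big_enum_cond; apply: eq_bigr => u _; rewrite count_map.
Qed.

Lemma sigma_source : sig s = 1%N.
Proof. by rewrite /sigma shortest_paths_source. Qed.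

Lemma sigma_rec t : t != s -> sig t = (\sum_(u | tight u t) sig u)%N.
Proof. by move=> ts; rewrite /sigma -count_predT count_shortest_paths_rec. Qed.

Lemma sigma_gt0 t : (0 < sig t)%N.
Proof. by have [p] := shortest_paths_exists t; rewrite /sigma; case: (SP t). Qed.

Lemma sigma_neq0 t : (sig t)%:R != 0 :> R.
Proof. by rewrite pnatr_eq0 -lt0n sigma_gt0. Qed.

Lemma sigma_through_source v : thr s v = (v == s).
Proof. by rewrite /sigma_through shortest_paths_source /= mem_seq1 addn0. Qed.

Lemma sigma_through_eq0 t v : dist t < dist v -> thr t v = 0%N.
Proof.
move=> tv; apply/eqP; rewrite -leqn0 leqNgt -has_count; apply/hasP => -[p].
rewrite mem_shortest_paths => /andP[sp /eqP pt] /(tight_path_dist_le sp).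
by rewrite pt leNgt tv.
Qed.

Lemma sigma_through_rec t v : t != s ->
  thr t v = ((v == t) * sig t + \sum_(u | tight u t) thr u v)%N.
Proof.
move=> ts; rewrite /sigma_through count_shortest_paths_rec //.
have [->|vt] := eqVneq v t; last first.
  apply: eq_bigr => u _; apply: eq_count => p.
  by rewrite -rcons_cons mem_rcons inE (negbTE vt).
have thr_pred0 : (\sum_(u | tight u t) thr u t = 0)%N.
  by rewrite big1 // => u /tight_dist_lt /sigma_through_eq0.
rewrite mul1n thr_pred0 addn0 (sigma_rec ts); apply: eq_bigr => u _.
by rewrite /sigma -count_predT; apply: eq_count => p; rewrite -rcons_cons mem_rcons mem_head.
Qed.

Lemma sigma_through_id x : thr x x = sig x.
Proof.
have [->|xs] := eqVneq x s; first by rewrite sigma_through_source sigma_source eqxx.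
rewrite sigma_through_rec // eqxx mul1n big1 ?addn0 // => u.
by move/tight_dist_lt/sigma_through_eq0.
Qed.

Lemma dist_ind (P : V -> Prop) :
  (forall t, (forall u, dist u < dist t -> P u) -> P t) -> forall t, P t.
Proof.
move=> IH t; have [n] := ubnP #|[pred u | dist u < dist t]|.
elim: n t => // n IHn t; rewrite ltnS => lt_t; apply: IH => u ut; apply: IHn.
apply: leq_trans lt_t; apply/proper_card/properP; split.
  by apply/subsetP => y; rewrite !inE => /lt_trans; apply.
by exists u; rewrite !inE ?ut ?ltxx.
Qed.

Lemma sigma_through_decomp t v : (thr t v)%:R =
  (t == v)%:R * (sig v)%:R + \sum_(x | tight v x) (sig v)%:R / (sig x)%:R * (thr t x)%:R :> R.
Proof.
elim/dist_ind: t => t IH; have [->|ts] := eqVneq t s.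
  rewrite sigma_through_source big1 => [|x /tight_neq_source xs].
    by rewrite addr0; have [->|_] := eqVneq v s; rewrite ?sigma_source ?mulr1 ?mul0r.
  by rewrite sigma_through_source (negbTE xs) mulr0.
rewrite sigma_through_rec // natrD natrM natr_sum.
under eq_bigr => u /tight_dist_lt /IH -> do [].
rewrite big_split /= sum_delta exchange_big /=.
under [in RHS]eq_bigr => x _.
  rewrite (@sigma_through_rec t x ts) natrD natrM natr_sum mulrDr mulr_sumr mulrCA.
  over.
rewrite big_split /= sum_delta divfK ?sigma_neq0 //; congr (_ + _).
by have [->|/negbTE vt] := eqVneq v t; rewrite ?eq_sym ?vt ?mul0r.
Qed.

Lemma bc_rec v :
  bc adj w v s = (sig v)%:R * \sum_(x | tight v x) Defs.ratio (bc adj w x s) (sig x)%:R.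
Proof.
rewrite /bc; under eq_bigr => t /negbTE tv.
  rewrite sigma_through_decomp tv mul0r add0r mulr_suml.
  over.
rewrite exchange_big mulr_sumr; apply: eq_bigr => x vx /=.
under eq_bigr do rewrite -mulrA.
rewrite /Defs.ratio (negbTE (sigma_neq0 x)) -mulr_sumr mulrAC -mulrA.
congr (_ * (_ * _)).
have skip_v : \sum_t (thr t x)%:R / (sig t)%:R =
              \sum_(t | t != v) (thr t x)%:R / (sig t)%:R :> R.
  by rewrite (bigD1 v) //= sigma_through_eq0 ?tight_dist_lt // mul0r add0r.
by rewrite -skip_v (bigD1 x) //= sigma_through_id divff ?sigma_neq0 // addrC.
Qed.

Lemma size_shortest_path_le_hopdiam t p : p \in SP t -> (size p <= hopdiam adj w)%N.
Proof.
move=> pP; apply: (@leq_trans (maxhop adj w s t)).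
  exact: (leq_bigmax_seq (F := fun q => size q) p pP).
apply: (@leq_trans (\max_t maxhop adj w s t)); first exact: (leq_bigmax t).
exact: (leq_bigmax (F := fun s => \max_t maxhop adj w s t) s).
Qed.

Lemma tight_path_size_lt_hopdiam v q : v != s -> path tight v q ->
  (size q < hopdiam adj w)%N.
Proof.
move=> vs vq; have [p pP] := shortest_paths_exists v.
have pqP : p ++ q \in SP (last v q).
  move: pP; rewrite !mem_shortest_paths cat_path last_cat.
  by case/andP=> -> /eqP ->; rewrite vq eqxx.
have := size_shortest_path_le_hopdiam pqP; rewrite size_cat.
case: p pP {pqP} => [|x p]; last by move=> _ /=; lia.
by rewrite mem_shortest_paths /= => /eqP sv; rewrite sv eqxx in vs.
Qed.

Lemma sum_sigma_tight_preds v (S : V -> R) : v != s ->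
  (forall u, tight u v -> S u = (sig u)%:R) ->
  \sum_(u in [set u | tight u v]) S u = (sig v)%:R.
Proof.
move=> vs S_pred; rewrite big_set (sigma_rec vs) natr_sum.
by apply: eq_bigr => u /S_pred.
Qed.

Lemma sum_ratio_tight_succs v (S B : V -> R) :
  (forall x, tight v x -> S x = (sig x)%:R /\ B x = bc adj w x s) ->
  (sig v)%:R * \sum_(x in [set x | tight v x]) Defs.ratio (B x) (S x) = bc adj w v s.
Proof.
move=> SB_succ; rewrite big_set bc_rec; congr (_ * _).
by apply: eq_bigr => x /SB_succ[-> ->].
Qed.

(** * Convergence of the algorithm *)

Lemma adj_neq v u : adj v u -> u != v.
Proof. by apply: contraTneq => ->; rewrite adj_irr. Qed.

Lemma exists_neighbor v : v != s -> exists u, adj v u.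
Proof.
move=> vs; have /connectP[[|u p] /= vp vs_eq] := connected v s.
  by rewrite vs_eq eqxx in vs.
by case/andP: vp => vu _; exists u.
Qed.

Lemma mem_msgs v u t : ((u, t) \in msgs adj v) = adj v u.
Proof.
apply/allpairsP/idP => [[[x y] /= [+ _ [-> _]]]|vu]; first by rewrite mem_filter => /andP[].
by exists (u, t); rewrite /= mem_filter vu !mem_enum.
Qed.

Lemma uniq_msgs v : uniq (msgs adj v).
Proof.
apply: allpairs_uniq => [||[? ?] [? ?] _ _ //]; last exact: enum_uniq.
by rewrite filter_uniq // enum_uniq.
Qed.

Lemma dist_le_relay u v d : adj u v -> ((dist u)%:E <= d)%E ->
  ((dist v)%:E <= d + (w u v)%:E)%E.
Proof.
move=> uv; case: d => [r| |] //=; last by rewrite addye ?leey.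
rewrite -EFinD !lee_fin => ur; apply: le_trans (dist_triangle uv) _.
by rewrite lerD2r.
Qed.

Definition sound_at v (st : lstate V R) :=
  [/\ ((dist v)%:E <= Dv st s)%E, NH st s \subset [set u | adj v u],
      PH st s \subset [set u | adj v u] & (v = s -> Sv st s s = 1)].

Definition sound (c : config V R) := forall x, sound_at x (c x).

Lemma sound_init : sound (init_state R).
Proof.
move=> x; rewrite /init_state; split; rewrite ?sub0set //=; last by move->; rewrite eqxx.
by case: eqP => [<-|_]; rewrite ?dist_source ?leey.
Qed.

Lemma notin_nbrs v (X : {set V}) : X \subset [set u | adj v u] -> v \notin X.
Proof. by move=> /subsetP X_nbrs; apply/negP => /X_nbrs; rewrite inE adj_irr. Qed.

Lemma sound_deliver c v st m : sound c -> sound_at v st -> adj v m.1 ->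
  sound_at v (deliver w c v st m).
Proof.
case: m => u t sound_c [D_ge N_nbrs P_nbrs S_ss] /= vu; have uv := adj_neq vu.
rewrite /sound_at.
have [->|ts] := eqVneq t s; last first.
  have [-> -> -> S_eq _] := deliver_off_s w c v st (m := (u, t)) ts.
  by split=> // /S_ss <-; apply: S_eq.
have [[D' N' P'] _ _ S_own] := deliver_at_s w s c st uv.
have [N_sub P_sub] := relax_subset (Dv st s) (NH st s) (PH st s) u
  (Dv (c u) s + (w u v)%:E) (Dv (c u) s - (w u v)%:E).
have add_u (X : {set V}) : X \subset [set x | adj v x] -> u |: X \subset [set x | adj v x].
  by move=> X_nbrs; rewrite subUset sub1set inE vu.
have N'_nbrs := subset_trans N_sub (add_u _ N_nbrs); rewrite -N' in N'_nbrs.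
have P'_nbrs := subset_trans P_sub (add_u _ P_nbrs); rewrite -P' in P'_nbrs.
split=> // [|vs]; last first.
  have [+ _] := S_own (notin_nbrs N'_nbrs) (notin_nbrs P'_nbrs).
  by rewrite -vs eqxx /= => ->; rewrite vs; apply: S_ss.
rewrite D'; apply: relax_D_ge => //; apply: dist_le_relay; first by rewrite adj_sym.
by case: (sound_c u).
Qed.

(* The rules by which [process] recomputes S[v,s] and B[v,s] hold in the current state. *)
Definition consistent v (st : lstate V R) :=
  Sv st v s = \sum_(x in NH st s) Sv st x s /\
  Bv st v s = Sv st v s * \sum_(x in PH st s) Defs.ratio (Bv st x s) (Sv st x s).

Lemma consistent_deliver c v st m : sound c -> v != s -> sound_at v st -> adj v m.1 ->
  m.2 = s \/ consistent v st -> consistent v (deliver w c v st m).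
Proof.
case: m => u t sound_c vs sound_st /= vu t_or; rewrite /consistent.
have [->|ts] := eqVneq t s.
  have [_ _ _ S_own] := deliver_at_s w s c st (adj_neq vu).
  have [_ N'_nbrs P'_nbrs _] := sound_deliver (m := (u, s)) sound_c sound_st vu.
  have [S' B'] := S_own (notin_nbrs N'_nbrs) (notin_nbrs P'_nbrs).
  by rewrite B' S' eq_sym vs.
case: t_or => [t_eq|[S_c B_c]]; first by rewrite t_eq eqxx in ts.
have [_ -> -> S_eq B_eq] := deliver_off_s w c v st (m := (u, t)) ts.
split; first by rewrite S_eq S_c; apply: eq_bigr => x _; rewrite S_eq.
by rewrite B_eq B_c S_eq; congr (_ * _); apply: eq_bigr => x _; rewrite S_eq B_eq.
Qed.

Lemma foldl_consistent c v st l : sound c -> v != s -> sound_at v st ->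
  (forall m, m \in l -> adj v m.1) -> has (fun m => m.2 == s) l ->
  consistent v (foldl (deliver w c v) st l).
Proof.
move=> sound_c vs; elim: l st => //= m l IH st sound_st senders.
have vm := senders m (mem_head m l).
have senders_l m' : m' \in l -> adj v m'.1 by move=> m'l; apply: senders; rewrite inE m'l orbT.
have sound_st' := sound_deliver sound_c sound_st vm.
case/orP=> [/eqP ms|]; last exact: IH.
pose P st := sound_at v st /\ consistent v st.
suff [] : P (foldl (deliver w c v) (deliver w c v st m) l) by [].
apply: foldl_ind => [|st' m' m'l [sound' cons']].
  by split=> //; apply: consistent_deliver => //; left.
split; first exact: sound_deliver sound_c sound' (senders_l m' m'l).
by apply: consistent_deliver => //; [apply: senders_l | right].
Qed.

Lemma phase_at_s c v l : sound c -> v != s -> perm_eq l (msgs adj v) ->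
  Dv (c v) s = (dist v)%:E -> let st := foldl (deliver w c v) (c v) l in
  [/\ Dv st s = (dist v)%:E,
      NH st s = [set x | adj v x && nh_cond w s c v (dist v)%:E x],
      PH st s = [set x | adj v x && ph_cond w s c v (dist v)%:E x],
      (forall x, adj v x -> Sv st x s = Sv (c x) x s /\ Bv st x s = Bv (c x) x s) &
      consistent v st].
Proof.
move=> sound_c vs l_msgs D_v /=.
have l_uniq : uniq l by rewrite (perm_uniq l_msgs) uniq_msgs.
have mem_l u t : ((u, t) \in l) = adj v u by rewrite (perm_mem l_msgs) mem_msgs.
have senders m : m \in l -> adj v m.1 by case: m => u t; rewrite mem_l.
have senders_neq m : m \in l -> m.1 != v by move/senders/adj_neq.
have D_le u : (u, s) \in l -> (Dv (c v) s <= Dv (c u) s + (w u v)%:E)%E.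
  rewrite mem_l D_v => vu; apply: dist_le_relay; first by rewrite adj_sym.
  by case: (sound_c u).
have [D' N' P'] := foldl_deliver_settled l_uniq senders_neq D_le.
have [_ N_nbrs P_nbrs _] := sound_c v.
have not_nbr (X : {set V}) x : X \subset [set u | adj v u] -> adj v x = false -> x \notin X.
  by move=> /subsetP X_nbrs vx; apply/negP => /X_nbrs; rewrite inE vx.
split=> [|||x vx|].
- by rewrite D' D_v.
- by apply/setP => x; rewrite N' inE mem_l D_v; case: ifP => // /(not_nbr _ _ N_nbrs)/negbTE.
- by apply/setP => x; rewrite P' inE mem_l D_v; case: ifP => // /(not_nbr _ _ P_nbrs)/negbTE.
- have := foldl_deliver_stored w s c (c v) l_uniq senders_neq (adj_neq vx).
  by rewrite /= mem_l vx => -[-> ->].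
apply: foldl_consistent => //; have [u vu] := exists_neighbor vs.
by apply/hasP; exists (u, s); rewrite ?mem_l.
Qed.

Lemma nh_cond_tight c v x : sound c -> adj v x ->
  (tight x v -> Dv (c x) s = (dist x)%:E) -> nh_cond w s c v (dist v)%:E x = tight x v.
Proof.
move=> sound_c vx D_x; have xv : adj x v by rewrite adj_sym.
rewrite /nh_cond /tight xv /=.
apply/idP/idP => [|tight_xv]; last by rewrite D_x /tight ?xv // -EFinD eqe.
have [+ _ _ _] := sound_c x; have := dist_triangle xv.
case: (Dv (c x) s) => [r| |] //=; rewrite lee_fin -EFinD eqe => ? ? /eqP ?.
by apply/eqP; lra.
Qed.

Lemma ph_cond_tight c v x : adj v x -> Dv (c x) s = (dist x)%:E ->
  ph_cond w s c v (dist v)%:E x = tight v x.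
Proof.
move=> vx D_x; rewrite /ph_cond /nh_cond /tight vx D_x -EFinD -EFinB !eqe /=.
have := w_pos vx; rewrite (w_sym vx).
by move=> ?; apply/andP/eqP => [[_ /eqP] | ?]; [lra | split; apply/eqP; lra].
Qed.

Lemma NH_settled c v : sound c -> (forall u, tight u v -> Dv (c u) s = (dist u)%:E) ->
  [set x | adj v x && nh_cond w s c v (dist v)%:E x] = [set u | tight u v].
Proof.
move=> sound_c D_pred; apply/setP => x; rewrite !inE.
case vx: (adj v x); last first.
  by apply/esym/negbTE; apply: contraFN vx => /tight_adj; rewrite adj_sym.
by rewrite nh_cond_tight // => /D_pred.
Qed.

Lemma PH_settled c v : (forall u, adj v u -> Dv (c u) s = (dist u)%:E) ->
  [set x | adj v x && ph_cond w s c v (dist v)%:E x] = [set x | tight v x].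
Proof.
move=> D_nbr; apply/setP => x; rewrite !inE.
case vx: (adj v x); last by apply/esym/negbTE; apply: contraFN vx => /tight_adj.
by rewrite ph_cond_tight ?D_nbr.
Qed.

Variable sched : nat -> V -> seq (V * V).
Hypothesis sched_ok : forall (k : nat) (v : V), perm_eq (sched k v) (msgs adj v).

Local Notation run := (run w sched).

Lemma sched_adj k v m : m \in sched k v -> adj v m.1.
Proof. by case: m => u t; rewrite (perm_mem (sched_ok k v)) mem_msgs. Qed.

Lemma sound_run k : sound (run k).
Proof.
elim: k => [|k IH] x; first exact: sound_init.
apply: foldl_ind => [|st m /sched_adj vm sound_st]; first exact: IH.
exact: sound_deliver IH sound_st vm.
Qed.

Lemma run_D_le k z p : p \in SP z -> (size p <= k)%N -> (Dv (run k z) s <= (dist z)%:E)%E.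
Proof.
elim: k z p => [|k IH] z p.
  case: p => // /[swap] _; rewrite mem_shortest_paths /= => /eqP <-.
  by rewrite /init_state eqxx dist_source.
have senders : forall m, m \in sched k z -> m.1 != z by move=> m /sched_adj/adj_neq.
have [D_le_prev D_le_msg] := foldl_deliver_D_le w s (run k) (run k z) senders.
case/lastP: p => [|q x].
  rewrite mem_shortest_paths /= => /eqP sz _; subst z; apply: le_trans D_le_prev _.
  by apply: (IH s [::]); rewrite ?shortest_paths_source ?mem_seq1.
rewrite mem_shortest_paths rcons_path last_rcons size_rcons.
case/andP=> /andP[sq qx] /eqP xz size_q; subst x; set u := last s q in qx.
apply: le_trans (D_le_msg u _) _.
  by rewrite (perm_mem (sched_ok k z)) mem_msgs adj_sym (tight_adj qx).
apply: le_trans (leeD2r _ (IH u q _ size_q)) _; first by rewrite mem_shortest_paths sq eqxx.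
by case/andP: qx => _ /eqP <-; rewrite EFinD.
Qed.

Lemma run_D_dist k z : (exists2 p, p \in SP z & (size p <= k)%N) ->
  Dv (run k z) s = (dist z)%:E.
Proof.
case=> p pP size_p; apply/eqP; rewrite eq_le (run_D_le pP size_p).
by case: (sound_run k z).
Qed.

Lemma run_D_dist_hopdiam k z : (hopdiam adj w <= k)%N -> Dv (run k z) s = (dist z)%:E.
Proof.
move=> Hk; have [p pP] := shortest_paths_exists z; apply: run_D_dist; exists p => //.
exact: leq_trans (size_shortest_path_le_hopdiam pP) Hk.
Qed.

Lemma run_S_sigma k z : (forall p, p \in SP z -> (size p < k)%N) ->
  Sv (run k z) z s = (sig z)%:R.
Proof.
elim: k z => [|k IH] z size_lt; first by have [p /size_lt] := shortest_paths_exists z.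
have [->|zs] := eqVneq z s.
  by have [_ _ _ ->] := sound_run k.+1 s; rewrite ?sigma_source.
have pred_lt u p : tight u z -> p \in SP u -> (size p < k)%N.
  by move=> uz /(rcons_shortest_path uz)/size_lt; rewrite size_rcons.
have D_exact u : tight u z -> Dv (run k u) s = (dist u)%:E.
  move=> uz; have [p pP] := shortest_paths_exists u.
  by apply: run_D_dist; exists p; last exact/ltnW/(pred_lt u).
have [p pP] := shortest_paths_exists z.
have [_ N' _ stored [S' _]] :=
  phase_at_s (sound_run k) zs (sched_ok k z) (run_D_dist (ex_intro2 _ _ p pP (size_lt p pP))).
rewrite S' N' (NH_settled (sound_run k) D_exact).
apply: sum_sigma_tight_preds => // u uz.
have zu : adj z u by rewrite adj_sym (tight_adj uz).
by rewrite (stored u zu).1 IH // => q /(pred_lt u q uz).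
Qed.

Lemma run_S_sigma_hopdiam k z : (hopdiam adj w < k)%N -> Sv (run k z) z s = (sig z)%:R.
Proof.
move=> Hk; apply: run_S_sigma => p /size_shortest_path_le_hopdiam.
by move/leq_ltn_trans; apply.
Qed.

Lemma run_B_bc k v : v != s ->
  (forall q, path tight v q -> (size q + hopdiam adj w + 1 <= k)%N) ->
  Bv (run k v) v s = bc adj w v s.
Proof.
elim: k v => [|k IH] v vs bound; first by have := bound [::] isT; rewrite addn1.
have Hk : (hopdiam adj w <= k)%N by have := bound [::] isT; rewrite add0n addn1.
have D_all u : Dv (run k u) s = (dist u)%:E := run_D_dist_hopdiam u Hk.
have [_ _ P' stored [_ B']] := phase_at_s (sound_run k) vs (sched_ok k v) (D_all v).
rewrite B' (run_S_sigma_hopdiam v (Hk : hopdiam adj w < k.+1)%N).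
rewrite P' (PH_settled (fun u _ => D_all u)); apply: sum_ratio_tight_succs => x vx.
have [-> ->] := stored x (tight_adj vx).
have bound_x q : path tight x q -> (size q + hopdiam adj w + 1 <= k)%N.
  by move=> xq; have := bound (x :: q); rewrite /= vx xq => /(_ isT); lia.
split; last exact: IH (tight_neq_source vx) bound_x.
by apply: run_S_sigma_hopdiam; have := bound_x [::] isT; lia.
Qed.

Definition settled (c : config V R) := forall u,
  [/\ Dv (c u) s = (dist u)%:E, Sv (c u) u s = (sig u)%:R &
      (u != s -> Bv (c u) u s = bc adj w u s)].

Definition settled_at v (st : lstate V R) :=
  [/\ Dv st s = (dist v)%:E, NH st s = [set u | tight u v], PH st s = [set x | tight v x],
      (forall x, adj v x -> Sv st x s = (sig x)%:R /\ (x != s -> Bv st x s = bc adj w x s)) &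
      Sv st v s = (sig v)%:R /\ Bv st v s = bc adj w v s].

Lemma consistent_settled v st : v != s -> consistent v st ->
  NH st s = [set u | tight u v] -> PH st s = [set x | tight v x] ->
  (forall x, adj v x -> Sv st x s = (sig x)%:R /\ (x != s -> Bv st x s = bc adj w x s)) ->
  Sv st v s = (sig v)%:R /\ Bv st v s = bc adj w v s.
Proof.
move=> vs [S_v B_v] N P stored.
have S_v' : Sv st v s = (sig v)%:R.
  rewrite S_v N; apply: sum_sigma_tight_preds => // u /tight_adj uv.
  by case: (stored u); rewrite // adj_sym.
split=> //; rewrite B_v S_v' P; apply: sum_ratio_tight_succs => x vx.
have [-> Bx] := stored x (tight_adj vx); split=> //; exact/Bx/(tight_neq_source vx).
Qed.

Lemma settled_at_sound v st : v != s -> settled_at v st -> sound_at v st.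
Proof.
move=> vs [D N P _ _]; split; rewrite ?D ?N ?P ?lexx //.
- by apply/subsetP => u; rewrite !inE adj_sym => /tight_adj.
- by apply/subsetP => u; rewrite !inE => /tight_adj.
- by move=> vs_eq; rewrite vs_eq eqxx in vs.
Qed.

Lemma settled_run k : (hopdiam adj w < k)%N -> (2 * hopdiam adj w <= k)%N -> settled (run k).
Proof.
move=> Hk H2k u; split; first exact/run_D_dist_hopdiam/ltnW.
  exact: run_S_sigma_hopdiam.
move=> us; apply: run_B_bc => // q /(tight_path_size_lt_hopdiam us); lia.
Qed.

Lemma settled_at_run k v : v != s -> (2 * hopdiam adj w < k)%N -> settled_at v (run k v).
Proof.
move=> vs; case: k => // k H2k.
have H_gt0 := tight_path_size_lt_hopdiam vs (erefl : path tight v [::]).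
have settled_k : settled (run k) by apply: settled_run; lia.
have D_k u : Dv (run k u) s = (dist u)%:E by case: (settled_k u).
have [D' N' P' stored cons'] := phase_at_s (sound_run k) vs (sched_ok k v) (D_k v).
rewrite /= (NH_settled (sound_run k) (fun u _ => D_k u)) in N'.
rewrite /= (PH_settled (fun u _ => D_k u)) in P'.
have stored' x : adj v x -> Sv (run k.+1 v) x s = (sig x)%:R /\
                             (x != s -> Bv (run k.+1 v) x s = bc adj w x s).
  by move=> vx; have [-> ->] := stored x vx; case: (settled_k x).
by split=> //; apply: consistent_settled.
Qed.

Lemma settled_deliver c v st m : v != s -> sound c -> settled c ->
  settled_at v st -> adj v m.1 -> settled_at v (deliver w c v st m).
Proof.
case: m => u t vs sound_c settled_c settled_st /= vu.
have sound_st := settled_at_sound vs settled_st.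
case: settled_st => D N P stored own; have [->|ts] := eqVneq t s; last first.
  have [D' N' P' S' B'] := deliver_off_s w c v st (m := (u, t)) ts.
  by split=> [|||x vx|]; rewrite ?D' ?N' ?P' ?S' ?B' //; apply: stored.
have uv := adj_neq vu; have uv' : adj u v by rewrite adj_sym.
have [D_u S_u B_u] := settled_c u.
have D_le : (Dv st s <= Dv (c u) s + (w u v)%:E)%E.
  by rewrite D D_u -EFinD lee_fin; apply: dist_triangle.
have [D' N' P'] := deliver_settled uv D_le.
have N'_eq : NH (deliver w c v st (u, s)) s = NH st s.
  apply/setP => x; rewrite N' D N inE; case: eqP => // ->.
  by rewrite nh_cond_tight // => _; apply: D_u.
have P'_eq : PH (deliver w c v st (u, s)) s = PH st s.
  by apply/setP => x; rewrite P' D P inE; case: eqP => // ->; rewrite ph_cond_tight.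
have stored' x : adj v x -> Sv (deliver w c v st (u, s)) x s = (sig x)%:R /\
    (x != s -> Bv (deliver w c v st (u, s)) x s = bc adj w x s).
  move=> vx; have := deliver_stored w s c st (m := (u, s)) uv (adj_neq vx).
  rewrite /= xpair_eqE eqxx andbT.
  by case: eqP => [xu|_] [-> ->]; [subst x | apply: stored].
split; rewrite ?D' ?N'_eq ?P'_eq //.
apply: consistent_settled; rewrite ?N'_eq ?P'_eq //.
by apply: (consistent_deliver (m := (u, s))) => //; left.
Qed.

Lemma settled_at_state_at k j v : v != s -> (2 * hopdiam adj w < k)%N ->
  settled_at v (state_at w sched k j v).
Proof.
move=> vs H2k; have H_gt0 := tight_path_size_lt_hopdiam vs (erefl : path tight v [::]).
apply: foldl_ind => [|st m /mem_take /sched_adj vm settled_st]; first exact: settled_at_run.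
by apply: settled_deliver (sound_run k) _ settled_st vm => //; apply: settled_run; lia.
Qed.
End Betweenness.

Theorem lemma4 (V : finType) (R : realFieldType) (adj : rel V)
  (w : V -> V -> R)
  (adj_sym : symmetric adj) (adj_irr : irreflexive adj)
  (connected : forall s t : V, connect adj s t)
  (w_sym : forall u v : V, adj u v -> w u v = w v u)
  (w_pos : forall u v : V, adj u v -> 0 < w u v)
  (sched : nat -> V -> seq (V * V))
  (sched_ok : forall (k : nat) (v : V), perm_eq (sched k v) (msgs adj v))
  (k j : nat) (v s : V) :
  s != v -> (2 * hopdiam adj w + 1 <= k)%N ->
  Bv (state_at w sched k j v) v s = bc adj w v s.
Proof.
rewrite eq_sym addn1 => vs H2k.
by have [_ _ _ _ [_ ->]] :=
  settled_at_state_at adj_sym adj_irr connected w_sym w_pos sched_ok j vs H2k.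
Qed.
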